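(* Let $V$ be a finite-dimensional real vector space with a metric $\mu$, let $\Phi'$ be a finite set of increasing filtrations on $V$ which has a compatible splitting, and let $\Phi\subset\Phi'$. Assume that $\mu$ gives compatible splittings of $\Phi$. Then there exists $g\in\mathrm{Aut}(V)$ such that $g(W_k)=W_k$ for all $W\in\Phi$ and all $k$, and such that $\mu$ gives compatible splittings of $g\Phi'=\{gW : W\in\Phi'\}$, where $(gW)_k:=g(W_k)$.
   Context: A metric on $V$ is a positive definite symmetric bilinear form. Filtrations $W=(W_k)_{k\in\mathbb Z}$ are increasing, with $W_k=0$ for $k\ll0$ and $W_k=V$ for $k\gg0$. Given a splitting of each $W$ in a finite set $\Phi$ of filtrations, these splittings are called compatible if there is a direct sum decomposition $V=\bigoplus_{w\in\mathbb Z^\Phi}V[w]$ such that for every $W\in\Phi$ and $k\in\mathbb Z$ the weight-$k$ part of the splitting of $W$ equals $\bigoplus_{w(W)=k}V[w]$; $\Phi$ ''has a compatible splitting'' if such splittings exist. A metric $\mu$ gives, for each $W$, the orthogonal splitting $V=\bigoplus_k V^W_k$ with $V^W_k$ the $\mu$-orthogonal complement of $W_{k-1}$ in $W_k$; ''$\mu$ gives compatible splittings of $\Phi$'' means these orthogonal splittings are compatible. *)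

From HB Require Import structures.
From mathcomp Require Import all_boot all_order all_algebra.
From mathcomp Require Import reals.
Set Implicit Arguments. Unset Strict Implicit. Unset Printing Implicit Defensive.
Import Order.TTheory GRing.Theory Num.Theory.
Local Open Scope ring_scope.

Section Defs.
Variables (R : realType) (V : vectType R).

Definition is_metric (mu : V -> V -> R) : Prop :=
  [/\ (forall (a : R) (u v w : V), mu (a *: u + v) w = a * mu u w + mu v w),
      (forall u v : V, mu u v = mu v u) &
      (forall v : V, v != 0 -> 0 < mu v v)].

Definition is_filtration (W : int -> {vspace V}) : Prop :=
  [/\ (forall k : int, (W k <= W (k + 1)%R)%VS),
      (exists a : int, forall k : int, k <= a -> W k = 0%VS) &
      (exists b : int, forall k : int, b <= k -> W k = fullv)].

(* A decomposition V = (+)_{w in Z^I} V[w] (finitely many nonzero summands,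
   listed in ws) such that, for every filtration W_i with i in Phi, the
   induced splitting V^{W_i}_k := (+)_{w(i)=k} V[w] is a splitting of W_i,
   i.e. W_i k = (+)_{j <= k} V^{W_i}_j = (+)_{w(i) <= k} V[w]. *)
Definition compatible_decomp (I : finType) (Phi : {set I})
    (W : I -> int -> {vspace V})
    (ws : seq {ffun I -> int}) (Vw : {ffun I -> int} -> {vspace V}) : Prop :=
  [/\ uniq ws,
      directv (\sum_(w <- ws) Vw w),
      (\sum_(w <- ws) Vw w)%VS = fullv &
      (forall i, i \in Phi -> forall k : int,
          W i k = (\sum_(w <- ws | (w i <= k)%R) Vw w)%VS)].

Definition has_compatible_splitting (I : finType) (Phi : {set I})
    (W : I -> int -> {vspace V}) : Prop :=
  exists ws Vw, compatible_decomp Phi W ws Vw.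

Definition in_orth_piece (mu : V -> V -> R) (W : int -> {vspace V})
    (k : int) (v : V) : Prop :=
  v \in W k /\ (forall u, u \in W (k - 1) -> mu v u = 0).

Definition gives_compatible_splittings (mu : V -> V -> R) (I : finType)
    (Phi : {set I}) (W : I -> int -> {vspace V}) : Prop :=
  exists ws Vw, compatible_decomp Phi W ws Vw /\
    (forall i, i \in Phi -> forall (k : int) (v : V),
       v \in (\sum_(w <- ws | w i == k) Vw w)%VS <-> in_orth_piece mu (W i) k v).

End Defs.

From HB Require Import structures.
From mathcomp Require Import all_boot all_order all_algebra.
From mathcomp Require Import reals.
From mathcomp Require Import zify.
Import Order.TTheory GRing.Theory Num.Theory.
Local Open Scope ring_scope.

(* Let (A j) be a decomposition of V splitting
   every filtration of Phi', with weights f j, and (B l) a decomposition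
   splitting the filtrations of Phi whose pieces are mu-orthogonal, with
   weights e l.
   - Grouping the B l by the restriction of their weight to Phi gives the
     Phi-graded pieces Cbar c of V; they are mutually orthogonal, and the
     orthogonal projection piC c onto Cbar c is injective on the sum of the
     A j whose weight agrees with c on Phi (both decompositions split the
     same Phi-multifiltration).  Hence hgr := sum_j piC (f j) o (A-component j)
     is an automorphism mapping each A j into Cbar (f j).
   - A Gram-Schmidt step then replaces the image of A j by its part
     orthogonal to the earlier images; this keeps it inside Cbar (f j),
     since each earlier image is either inside Cbar (f j) or orthogonal to it.
   The resulting automorphism g fixes every filtration of Phi (it maps
   W i k into itself and is injective) and makes the pieces g (A j)
   mutually orthogonal, so the orthogonal splittings of g Phi' are the
   splittings given by the decomposition (g (A j)). *)

Module Orthogonalization.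
Set Implicit Arguments. Unset Strict Implicit. Unset Printing Implicit Defensive.

Lemma sumv_nth (K : fieldType) (V : vectType K) (T : Type) (r : seq T) (x0 : T)
    (P : pred T) (F : T -> {vspace V}) :
  (\sum_(w <- r | P w) F w)%VS = (\sum_(j < size r | P (nth x0 r j)) F (nth x0 r j))%VS.
Proof. by rewrite (big_nth x0) big_mkord. Qed.

Lemma directv_nth (K : fieldType) (V : vectType K) (T : Type) (r : seq T) (x0 : T)
    (F : T -> {vspace V}) :
  directv (\sum_(w <- r) F w) = directv (\sum_(j < size r) F (nth x0 r j)).
Proof. by apply/directvP/directvP; rewrite /= !(big_nth x0) !big_mkord. Qed.

Section DirectComponents.
Variables (K : fieldType) (V : vectType K) (J : finType) (Vs : J -> {vspace V}).
Hypothesis dirVs : directv (\sum_j Vs j).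
Hypothesis fullVs : (\sum_j Vs j)%VS = fullv.

Definition dcomp (j : J) : 'End(V) := sumv_pi_for (erefl (\sum_j Vs j)%VS) j.

Lemma dcomp_mem j x : dcomp j x \in Vs j.
Proof. exact: memv_sum_pi. Qed.

Lemma dcomp_sum x : \sum_j dcomp j x = x.
Proof. by apply: sumv_pi_sum; rewrite fullVs memvf. Qed.

Lemma dcomp_unique (xs : J -> V) j :
  (forall i, xs i \in Vs i) -> dcomp j (\sum_i xs i) = xs j.
Proof.
move=> xsV; set x := \sum_i xs i.
have /directv_sum_unique uniq_dec := dirVs.
have := uniq_dec (fun i => dcomp i x) xs (fun i _ => dcomp_mem i x) (fun i _ => xsV i).
by rewrite dcomp_sum eqxx => /esym /forall_inP /(_ j isT) /eqP.
Qed.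

Lemma dcomp_id j x : x \in Vs j -> dcomp j x = x /\ forall i, i != j -> dcomp i x = 0.
Proof.
move=> xV; have xE : x = \sum_i (if i == j then x else 0).
  by rewrite -big_mkcond /= big_pred1_eq.
have xsV i : (if i == j then x else 0) \in Vs i by case: eqP => [->|_]; rewrite ?mem0v.
split; first by rewrite {1}xE dcomp_unique // eqxx.
by move=> i /negPf nij; rewrite xE dcomp_unique // nij.
Qed.

Lemma dcomp_mem_sum (P : pred J) x :
  reflect (forall i, ~~ P i -> dcomp i x = 0) (x \in (\sum_(i | P i) Vs i)%VS).
Proof.
apply: (iffP idP) => [/memv_sumP [xs xsV ->] i nPi | comp0].
  rewrite big_mkcond dcomp_unique /= ?(negPf nPi) // => j.
  by case: ifP => Pj; [exact: xsV | exact: mem0v].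
rewrite -(dcomp_sum x) (bigID P) /= [X in _ + X]big1 ?addr0; last by move=> i /comp0.
by apply: memv_sumr => i _; apply: dcomp_mem.
Qed.

End DirectComponents.

Section Metric.
Variables (R : realType) (V : vectType R) (mu : V -> V -> R).
Hypothesis mu_metric : is_metric mu.

Lemma mu_lin a u v w : mu (a *: u + v) w = a * mu u w + mu v w.
Proof. by case: mu_metric => lin _ _; apply: lin. Qed.

Lemma mu_sym u v : mu u v = mu v u.
Proof. by case: mu_metric => _ sym _; apply: sym. Qed.

Lemma mu_eq0 v : mu v v = 0 -> v = 0.
Proof.
case: mu_metric => _ _ pos vv0; apply/eqP; apply: contraTT isT => /pos.
by rewrite vv0 ltxx.
Qed.

Lemma muDl u v w : mu (u + v) w = mu u w + mu v w.
Proof. by rewrite -[u]scale1r mu_lin mul1r scale1r. Qed.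

Lemma mu0l w : mu 0 w = 0.
Proof. by apply: (addIr (mu 0 w)); rewrite -muDl !add0r. Qed.

Lemma muZl a u w : mu (a *: u) w = a * mu u w.
Proof. by rewrite -[a *: u]addr0 mu_lin mu0l addr0. Qed.

Lemma muBl u v w : mu (u - v) w = mu u w - mu v w.
Proof. by rewrite muDl -scaleN1r muZl mulN1r. Qed.

Lemma mu_suml (T : Type) (r : seq T) (P : pred T) (F : T -> V) w :
  mu (\sum_(t <- r | P t) F t) w = \sum_(t <- r | P t) mu (F t) w.
Proof. exact: (big_morph (mu ^~ w) (fun u v => muDl u v w) (mu0l w)). Qed.

Lemma mu_sumr (T : Type) (r : seq T) (P : pred T) (F : T -> V) w :
  mu w (\sum_(t <- r | P t) F t) = \sum_(t <- r | P t) mu w (F t).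
Proof. by rewrite mu_sym mu_suml; apply: eq_bigr => t _; rewrite mu_sym. Qed.

Definition orthv (S T : {vspace V}) : Prop :=
  forall a b, a \in S -> b \in T -> mu a b = 0.

Lemma orthv_sum (J : finType) (P P' : pred J) (S T : J -> {vspace V}) :
  (forall j j', P j -> P' j' -> orthv (S j) (T j')) ->
  orthv (\sum_(j | P j) S j) (\sum_(j | P' j) T j).
Proof.
move=> ST _ _ /memv_sumP [a aS ->] /memv_sumP [b bT ->].
rewrite mu_suml big1 // => j Pj; rewrite mu_sumr big1 // => j' P'j'.
exact: ST (aS j Pj) (bT j' P'j').
Qed.

Section OrthProjection.
Variable S : {vspace V}.

Definition mu_coords (v : V) : 'rV[R]_(\dim S) := \row_t mu v (vbasis S)`_t.

Lemma mu_coords_linear : linear mu_coords.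
Proof. by move=> a u v; apply/rowP => t; rewrite !mxE mu_lin. Qed.

HB.instance Definition _ :=
  GRing.isLinear.Build R V 'rV[R]_(\dim S) *:%R mu_coords mu_coords_linear.

Definition orth_compl : {vspace V} := lker (linfun mu_coords).

Lemma orth_compl_orth : orthv orth_compl S.
Proof.
move=> v s; rewrite memv_ker lfunE /= => /eqP v0 sS.
rewrite (coord_vbasis sS) mu_sumr big1 // => t _.
rewrite mu_sym muZl mu_sym.
by move/rowP: v0 => /(_ t); rewrite !mxE => ->; rewrite mulr0.
Qed.

Lemma orth_compl_cap : (S :&: orth_compl = 0)%VS.
Proof.
apply/eqP; rewrite -subv0; apply/subvP => v; rewrite memv_cap memv0 => /andP[vS vO].
by apply/eqP/mu_eq0/orth_compl_orth.
Qed.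

(* By rank-nullity, S and its orthogonal complement span V. *)
Lemma orth_compl_full : (S + orth_compl)%VS = fullv.
Proof.
apply/eqP; rewrite eqEdim subvf /= dimv_disjoint_sum ?orth_compl_cap //.
have := limg_ker_dim (linfun mu_coords) fullv; rewrite capfv -/orth_compl => dimE.
have : (\dim (linfun mu_coords @: fullv) <= \dim S)%N.
  by apply: leq_trans (dimvS (subvf _)) _; rewrite dimvf dim_matrix mul1r.
by rewrite -dimE addnC leq_add2r.
Qed.

Definition oproj : 'End(V) := daddv_pi S orth_compl.

Lemma oproj_mem x : oproj x \in S.
Proof. exact: memv_pi. Qed.

Lemma oproj_orth x s : s \in S -> mu (x - oproj x) s = 0.
Proof.
apply: orth_compl_orth.
have := daddv_pi_add (w := x) orth_compl_cap.
rewrite orth_compl_full memvf => /(_ isT) xE.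
by rewrite -{1}xE /oproj addrC addKr memv_pi.
Qed.

End OrthProjection.

(* If S = A + B with A inside U and B orthogonal to U, then the orthogonal
   projection onto S maps U into U (it is the projection onto A there). *)
Lemma oproj_stable (S A B U : {vspace V}) v :
  S = (A + B)%VS -> (A <= U)%VS -> orthv B U -> v \in U -> oproj S v \in U.
Proof.
move=> SE AU BU vU.
suff: forall p, p \in (A + B)%VS -> (forall s, s \in S -> mu (v - p) s = 0) -> p \in U.
  by apply; [rewrite -SE oproj_mem | apply: oproj_orth].
move=> p /memv_addP [a aA [b bB pE]] p_orth.
have bS : b \in S by rewrite SE -[b]add0r memv_add ?mem0v.
have ab0 : mu a b = 0 by rewrite mu_sym; apply: BU => //; apply: (subvP AU).
have vb0 : mu v b = 0 by rewrite mu_sym; apply: BU.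
have := p_orth b bS; rewrite muBl vb0 sub0r pE muDl ab0 add0r => /eqP.
rewrite oppr_eq0 => /eqP /mu_eq0 b0.
by rewrite b0 addr0; apply: (subvP AU).
Qed.

Section OrthFamily.
Variables (J : finType) (Y : J -> {vspace V}).
Hypothesis Y_orth : forall j j', j != j' -> orthv (Y j) (Y j').

Lemma orthv_disjoint_sums (P P' : pred J) : (forall j, P j -> P' j -> False) ->
  orthv (\sum_(j | P j) Y j) (\sum_(j | P' j) Y j).
Proof.
move=> PP'; apply: orthv_sum => j j' Pj P'j'; apply: Y_orth.
by apply: contraPneq (PP' j) => jj'; rewrite jj' in Pj *; apply.
Qed.

Lemma orth_directv : directv (\sum_j Y j).
Proof.
apply/directv_sum_independent => ys ysY ys0 j _; apply: mu_eq0.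
have : mu (\sum_j ys j) (ys j) = 0 by rewrite ys0 mu0l.
rewrite mu_suml (bigD1 j) //= big1 ?addr0 // => j' j'j.
exact: Y_orth (ysY j' isT) (ysY j isT).
Qed.

Lemma orth_piece (d : J -> int) (F : int -> {vspace V}) (k : int) v :
  (forall k, F k = \sum_(j | (d j <= k)%R) Y j)%VS ->
  v \in (\sum_(j | d j == k) Y j)%VS <-> in_orth_piece mu F k v.
Proof.
move=> FE.
have sub (P P' : pred J) : (forall j, P j -> P' j) ->
    (\sum_(j | P j) Y j <= \sum_(j | P' j) Y j)%VS.
  by move=> PP'; apply/subv_sumP => j Pj; apply: sumv_sup (PP' j Pj) (subvv _).
rewrite /in_orth_piece !FE; split=> [vk | [/memv_sumP [vs vsY vE] v_orth]].
  split; first by apply: (subvP (sub _ _ _)) vk => j /eqP ->.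
  by move=> u; apply: orthv_disjoint_sums vk => j /eqP ->; lia.
pose vlow := \sum_(j | (d j <= k) && (d j != k)) vs j.
pose vtop := \sum_(j | (d j <= k) && (d j == k)) vs j.
have vlowY : vlow \in (\sum_(j | (d j <= k - 1)%R) Y j)%VS.
  apply: (subvP (sub [pred j | (d j <= k) && (d j != k)] _ _)).
    by move=> j /andP [le ne]; lia.
  by apply: memv_sumr => j /andP [le _]; apply: vsY.
have vtopY : vtop \in (\sum_(j | (d j <= k)%R && (d j == k)) Y j)%VS.
  by apply: memv_sumr => j /andP [le _]; apply: vsY.
have vE' : v = vtop + vlow by rewrite vE (bigID (fun j => d j == k)).
have tl0 : mu vtop vlow = 0.
  by apply: orthv_disjoint_sums vtopY vlowY => j /andP [_ /eqP ->]; lia.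
have := v_orth _ vlowY; rewrite vE' muDl tl0 add0r => /mu_eq0 vlow0.
by rewrite vlow0 addr0; apply: (subvP (sub _ _ _)) vtopY => j /andP [].
Qed.

End OrthFamily.

End Metric.

(* Gram-Schmidt for a direct decomposition V = (+)_j A j, twisted by an
   injective endomorphism h: the image of A j under gs is h (A j) made
   orthogonal to the earlier pieces h (A j'), j' < j. *)
Section GramSchmidt.
Variables (R : realType) (V : vectType R) (mu : V -> V -> R).
Hypothesis mu_metric : is_metric mu.
Variables (n : nat) (A : 'I_n -> {vspace V}).
Hypothesis dirA : directv (\sum_j A j).
Hypothesis fullA : (\sum_j A j)%VS = fullv.
Variable h : 'End(V).
Hypothesis h_ker : lker h == 0%VS.

Local Notation cA := (dcomp A).
Local Notation oproj := (oproj mu).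

Definition Qgs (j : 'I_n) : {vspace V} := (\sum_(j' < n | (j' < j)%N) (h @: A j'))%VS.

Definition gs : 'End(V) := \sum_j ((\1 - oproj (Qgs j)) \o h \o cA j)%VF.

Definition Ygs (j : 'I_n) : {vspace V} := (gs @: A j)%VS.

Lemma gs_A j x : x \in A j -> gs x = h x - oproj (Qgs j) (h x).
Proof.
move=> /(dcomp_id dirA fullA) [xj x0]; rewrite sum_lfunE (bigD1 j) //= big1.
  by rewrite !comp_lfunE add_lfunE opp_lfunE id_lfunE xj addr0.
by move=> j' j'j; rewrite !comp_lfunE x0 // !linear0.
Qed.

Lemma Ygs_sub_Qgs (j j' : 'I_n) : (j' < j)%N -> (Ygs j' <= Qgs j)%VS.
Proof.
move=> j'j; apply/subvP => _ /memv_imgP [x xA ->]; rewrite (gs_A xA) memvB //.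
  exact: (subvP (sumv_sup j' j'j (subvv _))) (memv_img h xA).
apply: (subvP _ _ (oproj_mem mu _ _)); apply/subv_sumP => j'' j''j'.
exact: sumv_sup (ltn_trans j''j' j'j) (subvv _).
Qed.

Lemma Ygs_orth_Qgs j : orthv mu (Ygs j) (Qgs j).
Proof. by move=> _ s /memv_imgP [x xA ->]; rewrite (gs_A xA); apply: oproj_orth. Qed.

Lemma Ygs_orth j j' : j != j' -> orthv mu (Ygs j) (Ygs j').
Proof.
move=> jj' a b aY bY; case: (ltngtP j j') => [lt|lt|/val_inj eq].
- by rewrite (mu_sym mu_metric); apply: Ygs_orth_Qgs bY (subvP (Ygs_sub_Qgs lt) _ aY).
- exact: Ygs_orth_Qgs aY (subvP (Ygs_sub_Qgs lt) _ bY).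
- by rewrite eq eqxx in jj'.
Qed.

(* A vector of A j killed by gs lies in the earlier summands, hence is 0. *)
Lemma gs_A_eq0 j x : x \in A j -> gs x = 0 -> x = 0.
Proof.
move=> xA; rewrite (gs_A xA) => /eqP; rewrite subr_eq0 => /eqP hxQ.
have : h x \in (h @: (\sum_(j' < n | (j' < j)%N) A j'))%VS.
  by rewrite limg_sum hxQ oproj_mem.
case/memv_imgP => z zlow /(lker0P h_ker) xz.
have [<- _] := dcomp_id dirA fullA xA; rewrite xz.
by apply: (elimT (dcomp_mem_sum dirA fullA _ _) zlow); rewrite ltnn.
Qed.

Lemma gs_ker : lker gs == 0%VS.
Proof.
rewrite -subv0; apply/subvP => x; rewrite memv_ker memv0 => /eqP gx0.
have /directv_sum_independent indep := orth_directv mu_metric Ygs_orth.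
have comp0 j : gs (cA j x) = 0.
  apply: (indep (fun j => gs (cA j x))) => // [j' _|].
    exact/memv_img/dcomp_mem.
  by rewrite -linear_sum /= dcomp_sum.
rewrite -(dcomp_sum fullA x) big1 // => j _.
exact: gs_A_eq0 (dcomp_mem A j x) (comp0 j).
Qed.

Lemma Ygs_stable j (C : {vspace V}) : (h @: A j <= C)%VS ->
  (forall j' : 'I_n, (j' < j)%N -> (h @: A j' <= C)%VS \/ orthv mu (h @: A j') C) ->
  (Ygs j <= C)%VS.
Proof.
move=> hAC earlier; apply/subvP => _ /memv_imgP [x xA ->].
have hxC : h x \in C by apply: (subvP hAC); apply: memv_img.
rewrite (gs_A xA) memvB //.
pose Cin := [pred j' : 'I_n | (h @: A j' <= C)%VS].
have Qsplit : Qgs j = (\sum_(j' < n | (j' < j)%N && Cin j') (h @: A j')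
                    + \sum_(j' < n | (j' < j)%N && ~~ Cin j') (h @: A j'))%VS.
  by rewrite /Qgs (bigID Cin).
apply: (oproj_stable mu_metric Qsplit _ _ hxC).
  by apply/subv_sumP => j' /andP [_].
move=> _ c /memv_sumP [bs bsA ->] cC; rewrite (mu_suml mu_metric) big1 // => j' j'P.
have /andP [lt nin] := j'P.
case: (earlier j' lt) => [sub | orth]; [by move: nin; rewrite inE sub | exact: orth (bsA _ j'P) cC].
Qed.

End GramSchmidt.

Section PhiGraded.
Variables (R : realType) (V : vectType R) (mu : V -> V -> R).
Hypothesis mu_metric : is_metric mu.
Variables (I : finType) (Phi : {set I}) (W : I -> int -> {vspace V}).
Variables (m : nat) (e : 'I_m -> {ffun I -> int}) (B : 'I_m -> {vspace V}).
Hypothesis dirB : directv (\sum_l B l).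
Hypothesis fullB : (\sum_l B l)%VS = fullv.
Hypothesis WB : forall i, i \in Phi -> forall k : int,
  W i k = (\sum_(l | (e l i <= k)%R) B l)%VS.
Hypothesis orthB : forall i, i \in Phi -> forall (k : int) v,
  v \in (\sum_(l | e l i == k) B l)%VS -> in_orth_piece mu (W i) k v.

Local Notation cB := (dcomp B).

Definition sim (a b : {ffun I -> int}) : bool := [forall i in Phi, a i == b i].

Lemma sim_refl a : sim a a.
Proof. by apply/forall_inP. Qed.

Lemma sim_sym a b : sim a b = sim b a.
Proof. by apply/forall_inP/forall_inP => ab i /ab /eqP ->. Qed.

Lemma sim_trans a b c : sim a b -> sim b c -> sim a c.
Proof.
move=> /forall_inP ab /forall_inP bc; apply/forall_inP => i iP.
by rewrite (eqP (ab i iP)) bc.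
Qed.

Definition Cbar (c : {ffun I -> int}) : {vspace V} := (\sum_(l | sim (e l) c) B l)%VS.

Definition piC (c : {ffun I -> int}) : 'End(V) := \sum_(l | sim (e l) c) cB l.

Lemma CbarE c c' : sim c c' -> Cbar c = Cbar c'.
Proof.
move=> cc'; apply: eq_bigl => l; apply/idP/idP => [/sim_trans -> //|].
by move/sim_trans; apply; rewrite sim_sym.
Qed.

Lemma piCE c c' : sim c c' -> piC c = piC c'.
Proof.
move=> cc'; apply: eq_bigl => l; apply/idP/idP => [/sim_trans -> //|].
by move/sim_trans; apply; rewrite sim_sym.
Qed.

Lemma memB_W i l (k : int) x : i \in Phi -> x \in B l -> e l i <= k -> x \in W i k.
Proof. by move=> iP xB lk; rewrite (WB iP); apply: (subvP (sumv_sup l lk (subvv _))). Qed.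

Lemma Cbar_sub_W (c : {ffun I -> int}) i (k : int) : i \in Phi -> c i <= k -> (Cbar c <= W i k)%VS.
Proof.
move=> iP ck; apply/subv_sumP => l /forall_inP /(_ i iP) /eqP eli.
by apply/subvP => x xB; apply: (memB_W iP xB); rewrite eli.
Qed.

(* B l is the orthogonal piece of weight e l i, so it is orthogonal to the
   previous step of W i; hence non-equivalent weights give orthogonal B's. *)
Lemma B_orth l l' : ~~ sim (e l) (e l') -> orthv mu (B l) (B l').
Proof.
have below i l1 l2 x y : i \in Phi -> e l2 i < e l1 i -> x \in B l1 -> y \in B l2 ->
    mu x y = 0.
  move=> iP lt xB yB; have [_ orth] := orthB iP (k := e l1 i) (v := x)
    (subvP (sumv_sup (P := fun l' => e l' i == e l1 i) l1 (eqxx _) (subvv _)) _ xB).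
  by apply: orth; apply: memB_W yB _; lia.
move=> /forall_inPn [i iP neq] x y xB yB.
case: (ltgtP (e l i) (e l' i)) neq => // lt _; last exact: below lt xB yB.
by rewrite (mu_sym mu_metric); apply: below lt yB xB.
Qed.

Lemma Cbar_orth c c' : ~~ sim c c' -> orthv mu (Cbar c) (Cbar c').
Proof.
move=> ncc'; apply: (orthv_sum mu_metric) => l l' lc l'c'; apply: B_orth.
apply: contra ncc' => ll'; apply: sim_trans l'c'; apply: sim_trans ll'.
by rewrite sim_sym.
Qed.

Lemma piC_mem c x : piC c x \in Cbar c.
Proof. by rewrite sum_lfunE; apply: memv_sumr => l _; apply: dcomp_mem. Qed.

Lemma piC_Cbar c c' y : y \in Cbar c' -> piC c y = if sim c' c then y else 0.
Proof.
move=> /(dcomp_mem_sum dirB fullB) y0; rewrite sum_lfunE; case: ifP => c'c.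
  rewrite -{2}(dcomp_sum fullB y) [RHS](bigID (fun l => sim (e l) c)) /=.
  rewrite [X in _ = _ + X]big1 ?addr0 // => l nlc; apply: y0.
  by apply: contra nlc => /sim_trans; apply.
apply: big1 => l lc; apply: y0; apply: contraFN c'c => lc'.
by apply: sim_trans lc; rewrite sim_sym.
Qed.


Variables (n : nat) (f : 'I_n -> {ffun I -> int}) (A : 'I_n -> {vspace V}).
Hypothesis dirA : directv (\sum_j A j).
Hypothesis fullA : (\sum_j A j)%VS = fullv.
Hypothesis WA : forall i, i \in Phi -> forall k : int,
  W i k = (\sum_(j | (f j i <= k)%R) A j)%VS.

Local Notation cA := (dcomp A).

Lemma cB_below (c : {ffun I -> int}) X l : (forall i, i \in Phi -> X \in W i (c i)) -> ~~ sim (e l) c ->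
  exists2 i, i \in Phi & cB l X \in W i (c i - 1).
Proof.
move=> Xc /forall_inPn [i0 i0P neq0].
have [->|nz] := eqVneq (cB l X) 0; first by exists i0; rewrite ?mem0v.
have le i : i \in Phi -> e l i <= c i.
  move=> iP; have := Xc i iP; rewrite (WB iP) => /(dcomp_mem_sum dirB fullB)/(_ l) comp0.
  by apply: contraTT nz => /comp0 ->; rewrite negbK.
exists i0 => //; apply: (memB_W i0P (dcomp_mem B l X)).
by have := le i0 i0P; move: neq0; lia.
Qed.

(* piC c is injective on the sum of the A j of weight equivalent to c:
   both decompositions split the same Phi-multifiltration. *)
Lemma piC_class_inj (c : {ffun I -> int}) X :
  X \in (\sum_(j | sim (f j) c) A j)%VS -> piC c X = 0 -> X = 0.
Proof.
move=> Xclass piX0.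
have Xc i : i \in Phi -> X \in W i (c i).
  move=> iP; rewrite (WA iP); apply: (subvP _ _ Xclass).
  apply/subv_sumP => j /forall_inP /(_ i iP) /eqP fji.
  by apply: sumv_sup (subvv _); rewrite fji.
have /(dcomp_mem_sum dirA fullA) Xout := Xclass.
rewrite -(dcomp_sum fullA X) big1 // => j _.
have [jc|/Xout //] := boolP (sim (f j) c).
rewrite -{1}(dcomp_sum fullB X) linear_sum (bigID (fun l => sim (e l) c)) /=.
rewrite -linear_sum -sum_lfunE -/(piC c) piX0 linear0 add0r big1 // => l nlc.
have [i iP] := cB_below Xc nlc; rewrite (WA iP) => /(dcomp_mem_sum dirA fullA); apply.
by have /forall_inP /(_ i iP) /eqP -> := jc; lia.
Qed.

Definition hgr : 'End(V) := \sum_j (piC (f j) \o cA j)%VF.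

Lemma hgr_A j x : x \in A j -> hgr x = piC (f j) x.
Proof.
move=> /(dcomp_id dirA fullA) [xj x0]; rewrite sum_lfunE (bigD1 j) //= big1.
  by rewrite comp_lfunE xj addr0.
by move=> j' j'j; rewrite comp_lfunE x0 // linear0.
Qed.

Lemma hgr_A_Cbar j : (hgr @: A j <= Cbar (f j))%VS.
Proof. by apply/subvP => _ /memv_imgP [x xA ->]; rewrite (hgr_A xA) piC_mem. Qed.

Lemma hgr_ker : lker hgr == 0%VS.
Proof.
rewrite -subv0; apply/subvP => x; rewrite memv_ker memv0 => /eqP hx0.
suff comp0 j0 : cA j0 x = 0.
  by apply/eqP; rewrite -(dcomp_sum fullA x) big1.
pose X := \sum_(j | sim (f j) (f j0)) cA j x.
have Xclass : X \in (\sum_(j | sim (f j) (f j0)) A j)%VS.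
  by apply: memv_sumr => j _; apply: dcomp_mem.
have piX0 : piC (f j0) X = 0.
  have hxE : hgr x = \sum_j piC (f j) (cA j x).
    by rewrite sum_lfunE; apply: eq_bigr => j _; rewrite comp_lfunE.
  rewrite -(linear0 (piC (f j0))) -hx0 hxE !linear_sum /=.
  rewrite [RHS](bigID (fun j => sim (f j) (f j0))) /= [X in _ = _ + X]big1 ?addr0.
    by apply: eq_bigr => j jc; rewrite (piC_Cbar _ (piC_mem _ _)) jc (piCE jc).
  by move=> j njc; rewrite (piC_Cbar _ (piC_mem _ _)) (negPf njc).
have <- : cA j0 X = cA j0 x.
  rewrite /X big_mkcond /= dcomp_unique ?sim_refl // => j.
  by case: ifP => _; rewrite ?mem0v ?dcomp_mem.
by rewrite (piC_class_inj Xclass piX0) linear0.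
Qed.

(* Gram-Schmidt applied to hgr keeps every A j inside its graded piece,
   because the graded pieces are mutually orthogonal. *)
Lemma gs_class j : (Ygs mu A hgr j <= Cbar (f j))%VS.
Proof.
apply: (Ygs_stable mu_metric dirA fullA (hgr_A_Cbar j)) => j' _.
have [jj'|njj'] := boolP (sim (f j') (f j)).
  by left; rewrite -(CbarE jj'); apply: hgr_A_Cbar.
right=> a b aA bC; apply: (Cbar_orth njj') bC; exact: (subvP (hgr_A_Cbar j')).
Qed.

Lemma gs_fix_Phi i k : i \in Phi -> (gs mu A hgr @: W i k)%VS = W i k.
Proof.
move=> iP; have gs_inj := gs_ker mu_metric dirA fullA hgr_ker.
apply/eqP; rewrite eqEdim limg_dim_eq ?(eqP gs_inj) ?capv0 // leqnn andbT.
rewrite {1}(WA iP) limg_sum; apply/subv_sumP => j fjk.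
apply: subv_trans (gs_class j) _; exact: Cbar_sub_W.
Qed.

Lemma orthogonalize : exists g : 'End(V),
  [/\ lker g == 0%VS,
      forall i, i \in Phi -> forall k, (g @: W i k)%VS = W i k &
      forall j j', j != j' -> orthv mu (g @: A j) (g @: A j')].
Proof.
exists (gs mu A hgr); split; first exact: (gs_ker mu_metric dirA fullA hgr_ker).
  by move=> i iP k; apply: gs_fix_Phi.
exact: (Ygs_orth mu_metric dirA fullA).
Qed.

End PhiGraded.
End Orthogonalization.
Import Orthogonalization.

Theorem proposition4p6p12 (R : realType) (V : vectType R) (mu : V -> V -> R)
    (I : finType) (W : I -> int -> {vspace V}) (Phi : {set I}) :
  is_metric mu ->
  (forall i, is_filtration (W i)) ->
  (forall i j, (forall k, W i k = W j k) -> i = j) ->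
  has_compatible_splitting [set: I] W ->
  gives_compatible_splittings mu Phi W ->
  exists g : 'End(V),
    bijective g /\
    (forall i, i \in Phi -> forall k : int, (g @: W i k)%VS = W i k) /\
    gives_compatible_splittings mu [set: I] (fun i k => (g @: W i k)%VS).
Proof.
move=> mu_metric _ _ [ws [Vw [uniq_ws dirVw fullVw WVw]]].
move=> [ws' [Vw' [[_ dirVw' fullVw' WVw'] orthVw']]].
pose w0 : {ffun I -> int} := [ffun=> 0].
pose A j := Vw (nth w0 ws j); pose B l := Vw' (nth w0 ws' l).
have dirA : directv (\sum_(j < size ws) A j) by rewrite -(directv_nth _ w0).
have fullA : (\sum_(j < size ws) A j)%VS = fullv by rewrite -fullVw (sumv_nth _ w0).
have WA i k : W i k = (\sum_(j < size ws | (nth w0 ws j i <= k)%R) A j)%VS.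
  by rewrite WVw ?inE // (sumv_nth _ w0).
have dirB : directv (\sum_(l < size ws') B l) by rewrite -(directv_nth _ w0).
have fullB : (\sum_(l < size ws') B l)%VS = fullv by rewrite -fullVw' (sumv_nth _ w0).
have WB i : i \in Phi -> forall k,
    W i k = (\sum_(l < size ws' | (nth w0 ws' l i <= k)%R) B l)%VS.
  by move=> iP k; rewrite WVw' // (sumv_nth _ w0).
have orthB i : i \in Phi -> forall k v,
    v \in (\sum_(l < size ws' | nth w0 ws' l i == k) B l)%VS -> in_orth_piece mu (W i) k v.
  by move=> iP k v vB; apply/(orthVw' i iP k v); rewrite (sumv_nth _ w0).
have [g [g_ker gW g_orth]] :=
  orthogonalize mu_metric dirB fullB WB orthB dirA fullA (fun i _ => WA i).
have gWE i k : (g @: W i k)%VS = (\sum_(w <- ws | (w i <= k)%R) (g @: Vw w))%VS.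
  by rewrite WVw ?inE // limg_sum.
exists g; split; first by exists (g^-1)%VF; [exact: lker0_lfunK | exact: lker0_lfunVK].
split=> //; exists ws, (fun w => (g @: Vw w)%VS); split; first split.
- exact: uniq_ws.
- by rewrite (directv_nth _ w0); exact: (orth_directv mu_metric g_orth).
- by rewrite -limg_sum fullVw lker0_limgf.
- by move=> i _ k; apply: gWE.
- move=> i _ k v; rewrite (sumv_nth _ w0).
  by apply: (orth_piece mu_metric g_orth) => k'; rewrite gWE (sumv_nth _ w0).
Qed.
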